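(* Let $R=\mathbb{K}[x_{i,i+1},x_{i,i+2}: i\in\mathbb{N}]$, $\varphi:R\to\mathbb{K}[x_i:i\in\mathbb{N}]$ with $\varphi(x_{i,i+1})=x_ix_{i+1}$, $\varphi(x_{i,i+2})=x_ix_{i+2}$, and $I=\ker\varphi$. Let $g=\prod x_{i,j}^{u_{i,j}}-\prod x_{i,j}^{v_{i,j}}\in I$ be a binomial that is not a multiple of any variable, and let $c$ be the smallest vertex adjacent to $g$. Then $w_g([c,c+1])=-w_g([c,c+2])\ne0$.
   Context: $\mathbb{K}$ is a field. $E=\{[i,i+1],[i,i+2]:i\in\mathbb{N}\}$, $w_g([i,j])=u_{i,j}-v_{i,j}$ for $[i,j]\in E$; a vertex $n\in\mathbb{N}$ is adjacent to $g$ if $n\in\{i,j\}$ for some $[i,j]\in E$ with $w_g([i,j])\ne0$ (the statement presupposes such a vertex exists). *)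

From HB Require Import structures.
From mathcomp Require Import all_boot all_order all_algebra.
From mathcomp Require Import finmap.
From mathcomp.multinomials Require Import monalg.
Set Implicit Arguments. Unset Strict Implicit. Unset Printing Implicit Defensive.
Import Order.TTheory GRing.Theory Num.Theory.
Local Open Scope ring_scope.

(* Edge set E = {[i,i+1],[i,i+2] : i in N}: the edge (i,false) is [i,i+1],
   the edge (i,true) is [i,i+2]. *)
Definition edge : choiceType := (nat * bool)%type.
Definition esrc (e : edge) : nat := e.1.
Definition etgt (e : edge) : nat := (e.1 + (if e.2 then 2 else 1))%N.

Definition Rring (K : fieldType) := {malg K[{cmonom edge}]}.
Definition Sring (K : fieldType) := {malg K[{cmonom nat}]}.

Definition xS (K : fieldType) (i : nat) : Sring K := << ucm i >>.
Definition xR (K : fieldType) (e : edge) : Rring K := << ucm e >>.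
Definition monR (K : fieldType) (m : {cmonom edge}) : Rring K := << m >>.

Definition phi_mon (K : fieldType) (m : {cmonom edge}) : Sring K :=
  \prod_(e <- finsupp m) (xS K (esrc e) * xS K (etgt e)) ^+ (m e).
Definition phi (K : fieldType) (g : Rring K) : Sring K :=
  mmap (fun c : K => c%:MP) (phi_mon K) g.
Definition inI (K : fieldType) (g : Rring K) : Prop := phi g = 0.

Definition wg (u v : {cmonom edge}) (e : edge) : int := (u e)%:Z - (v e)%:Z.

Definition adjacent (u v : {cmonom edge}) (n : nat) : Prop :=
  exists e : edge, ((esrc e == n) || (etgt e == n)) /\ wg u v e != 0.

(* phi sends x^u to the monomial of S whose exponent at a vertex i is the
   u-weighted degree of i, sum_e u_e * #{endpoints of e equal to i}; so g in I
   forces u and v to have the same weighted degree at every vertex.  At the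
   smallest vertex c adjacent to g, an edge e through c with w_g(e) <> 0 has
   its source adjacent to g, hence at least c, so e is [c,c+1] or [c,c+2].
   Comparing degrees at c gives w_g([c,c+1]) + w_g([c,c+2]) = 0, and since c
   is adjacent to g one of them, hence both, are nonzero. *)

From HB Require Import structures.
From mathcomp Require Import all_boot all_order all_algebra.
From mathcomp Require Import finmap.
From mathcomp.multinomials Require Import monalg.
From mathcomp Require Import zify.
Import GRing.Theory Num.Theory.
Local Open Scope ring_scope.

Section MonomialAlgebra.
Variables (M : monomType) (R : nzRingType).

Lemma monalgU1M (a b : M) : << mmul a b >> = << a >> * << b >> :> {malg R[M]}.
Proof. by rewrite malgM_def fgmulUU mulr1. Qed.

Lemma monalgU1_prod (I : Type) (r : seq I) (F : I -> M) :
  << \big[mmul/mone]_(i <- r) F i >> = \prod_(i <- r) << F i >> :> {malg R[M]}.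
Proof. exact: (big_morph _ monalgU1M). Qed.

Lemma monalgU1_inj : injective (fun k : M => << k >> : {malg R[M]}).
Proof.
move=> a b /(congr1 (mcoeff a)); rewrite !mcoeffU1 eqxx.
by case: eqP => // _ /eqP; rewrite oner_eq0.
Qed.

End MonomialAlgebra.

Lemma mmapU1 (M N : monomType) (R : nzRingType) (h : M -> {malg R[N]}) (k : M) :
  mmap (fun c : R => c%:MP) h << k >> = h k.
Proof. by rewrite mmapU; apply: (etrans _ (mul1r _)); congr (_ * _). Qed.

Lemma cm_prod (I : choiceType) (J : Type) (r : seq J) (F : J -> {cmonom I}) i :
  (\big[mmul/mone]_(j <- r) F j) i = (\sum_(j <- r) F j i)%N.
Proof. exact: (big_morph (fun m : {cmonom I} => m i) (cmM i) (cm1 i)). Qed.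

Lemma sum_finsupp_incl {I : choiceType} {m : {cmonom I}} (f : I -> nat) {F : {fset I}} :
  (finsupp m `<=` F)%fset ->
  (\sum_(i <- finsupp m) m i * f i = \sum_(i <- F) m i * f i)%N.
Proof.
move=> mF; apply: big_fset_incl => // i _.
by rewrite -cmE_eq0 => /eqP ->.
Qed.

Definition incidence (e : edge) (i : nat) : nat := (esrc e == i) + (etgt e == i).

Definition edge_monom (e : edge) : {cmonom nat} := mmul (ucm (esrc e)) (ucm (etgt e)).

Definition phi_exponent (m : {cmonom edge}) : {cmonom nat} :=
  \big[mmul/mone]_(e <- finsupp m) \big[mmul/mone]_(k < m e) edge_monom e.

Lemma phi_monR (K : fieldType) (m : {cmonom edge}) :
  phi (monR K m) = << phi_exponent m >>.
Proof.
rewrite /phi /monR mmapU1 /phi_mon /phi_exponent monalgU1_prod.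
apply: eq_bigr => e _; rewrite monalgU1_prod prodr_const card_ord.
by rewrite /edge_monom monalgU1M; congr (_ ^+ _).
Qed.

Lemma phi_exponentE (m : {cmonom edge}) (i : nat) :
  phi_exponent m i = (\sum_(e <- finsupp m) m e * incidence e i)%N.
Proof.
rewrite cm_prod; apply: eq_bigr => e _.
by rewrite cm_prod sum_nat_const card_ord cmM !cmU.
Qed.

Lemma phiB (K : fieldType) : {morph @phi K : x y / x - y}.
Proof. exact: mmapB. Qed.

Lemma phi_binomial (K : fieldType) (u v : {cmonom edge}) :
  phi (monR K u - monR K v) = << phi_exponent u >> - << phi_exponent v >>.
Proof. by rewrite phiB; congr (_ - _); apply: phi_monR. Qed.

Lemma inI_phi_exponent_eq {K : fieldType} {u v : {cmonom edge}} :
  inI (monR K u - monR K v) -> phi_exponent u = phi_exponent v.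
Proof. by rewrite /inI phi_binomial => /subr0_eq; apply: monalgU1_inj. Qed.

Lemma incidence_self (c : nat) (b : bool) : incidence (c, b) c = 1%N.
Proof. by rewrite /incidence /esrc /etgt /= eqxx; case: b; lia. Qed.

Lemma phi_exponent_split {m : {cmonom edge}} {F : {fset edge}} {c : nat} :
  (finsupp m `<=` F)%fset -> (c, false) \in F -> (c, true) \in F ->
  phi_exponent m c =
    (m (c, false) + m (c, true)
     + \sum_(e <- (F `\ (c, false) `\ (c, true))%fset) m e * incidence e c)%N.
Proof.
move=> mF cfF ctF; have ct_cf : (c, true) \in (F `\ (c, false))%fset.
  by rewrite !inE ctF andbT xpair_eqE eqxx.
rewrite phi_exponentE (sum_finsupp_incl _ mF) (big_fsetD1 _ cfF) (big_fsetD1 _ ct_cf).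
by rewrite !incidence_self !muln1 /= addnA.
Qed.

Lemma wg_eq0 (u v : {cmonom edge}) (e : edge) : (wg u v e == 0) = (u e == v e).
Proof. by rewrite subr_eq0 eqz_nat. Qed.

Section MinimalVertex.
Context {u v : {cmonom edge}} {c : nat}.
Hypothesis c_min : forall n : nat, adjacent u v n -> (c <= n)%N.

Lemma min_vertex_le_esrc {e : edge} : wg u v e != 0 -> (c <= esrc e)%N.
Proof. by move=> we; apply: c_min; exists e; rewrite eqxx. Qed.

Lemma min_vertex_edge_eq {e : edge} :
  e != (c, false) -> e != (c, true) -> incidence e c != 0%N -> u e = v e.
Proof.
case: e => i b ecf ect; apply: contraNeq; rewrite -wg_eq0 => w_neq0.
have ic : i != c by apply/eqP => ic; subst i; case: b ecf ect {w_neq0}; rewrite eqxx.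
have ci := min_vertex_le_esrc w_neq0.
by move: ci ic; rewrite /incidence /esrc /etgt /=; case: b {ecf ect w_neq0}; lia.
Qed.

Lemma min_vertex_edge_neq0 :
  adjacent u v c -> wg u v (c, false) != 0 \/ wg u v (c, true) != 0.
Proof.
case=> [[i b] []]; rewrite /esrc /etgt /= => /orP[/eqP -> | /eqP tc] w_neq0.
  by case: b w_neq0; [right | left].
have := min_vertex_le_esrc w_neq0.
by move: tc; rewrite /esrc /=; case: b {w_neq0}; lia.
Qed.

Lemma min_vertex_balance :
  phi_exponent u c = phi_exponent v c ->
  (u (c, false) + u (c, true) = v (c, false) + v (c, true))%N.
Proof.
set F := (finsupp u `|` finsupp v `|` [fset (c, false); (c, true)])%fset.
have cfF : (c, false) \in F by rewrite !inE eqxx !orbT.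
have ctF : (c, true) \in F by rewrite !inE eqxx !orbT.
have uF : (finsupp u `<=` F)%fset by apply/fsubsetP => e eu; rewrite !inE eu.
have vF : (finsupp v `<=` F)%fset by apply/fsubsetP => e ev; rewrite !inE ev !orbT.
rewrite (phi_exponent_split uF cfF ctF) (phi_exponent_split vF cfF ctF).
suff -> : (\sum_(e <- (F `\ (c, false) `\ (c, true))%fset) u e * incidence e c =
           \sum_(e <- (F `\ (c, false) `\ (c, true))%fset) v e * incidence e c)%N.
  exact: addIn.
apply: eq_big_seq => e; rewrite !inE => /and3P[ect ecf _].
have [->|inc] := eqVneq (incidence e c) 0%N; first by rewrite !muln0.
by rewrite (min_vertex_edge_eq ecf ect inc).
Qed.

End MinimalVertex.

Theorem corollary6p2 (K : fieldType) (u v : {cmonom edge}) (c : nat) :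
  inI (monR K u - monR K v) ->
  (forall (e : edge) (q : Rring K), monR K u - monR K v <> xR K e * q) ->
  adjacent u v c ->
  (forall n : nat, adjacent u v n -> (c <= n)%N) ->
  wg u v (c, false) = - wg u v (c, true) /\ wg u v (c, false) != 0.
Proof.
move=> g_in_I _ adj_c c_min.
have balance := min_vertex_balance c_min
  (congr1 (fun m : {cmonom nat} => m c) (inI_phi_exponent_eq g_in_I)).
have w_opp : wg u v (c, false) = - wg u v (c, true) by rewrite /wg; lia.
split=> //.
by case: (min_vertex_edge_neq0 c_min adj_c) => //; rewrite w_opp oppr_eq0.
Qed.
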